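(* Let $n,m_1,m_2$ be nonnegative integers. Let $B_1(m_1,m_2,n)$ be the number of partitions of $n$ into parts congruent to $0,2,3,$ or $4\pmod 6$ having exactly $m_1$ parts congruent to $2\pmod 6$ and exactly $m_2$ parts congruent to $4\pmod 6$. Let $B_2(m_1,m_2,n)$ be the number of partitions of $n$ in which no two consecutive integers both appear as parts and all parts are at least $2$, having exactly $m_2$ parts congruent to $1\pmod 3$ and exactly $m_1$ parts congruent to $2\pmod 3$. Then $B_1(m_1,m_2,n)=B_2(m_1,m_2,n)$. Equivalently, if $\Lambda$ denotes the set of partitions with no part equal to $1$ in which no two consecutive integers both appear as parts, and $\#_{1,3}(\lambda)$, $\#_{2,3}(\lambda)$ denote the numbers of parts of $\lambda$ congruent to $1$ and $2\pmod 3$ respectively (counted with multiplicity), then as formal power series $$\sum_{\lambda\in\Lambda}A^{\#_{2,3}(\lambda)}C^{\#_{1,3}(\lambda)}q^{|\lambda|}=\frac{1}{(q^3;q^3)_\infty\,(Aq^2;q^6)_\infty\,(Cq^4;q^6)_\infty}.$$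
   Context: $|\lambda|$ is the sum of the parts of $\lambda$. Standard $q$-Pochhammer notation: $(a;q)_\infty=\prod_{j\ge0}(1-aq^j)$. Numbers of parts in a given residue class are counted with multiplicity. *)

From mathcomp Require Import all_boot.
Set Implicit Arguments. Unset Strict Implicit. Unset Printing Implicit Defensive.

(* A partition of n is encoded by its multiplicity function
   mu : {ffun 'I_n.+1 -> 'I_n.+1}, where mu i = number of parts equal to i.
   Every part of a partition of n is <= n and occurs at most n times, so this
   encoding is a bijection onto partitions of n once we require
   mu 0 = 0 and  \sum_i i * mu i = n. *)
Definition mult_fun (n : nat) := {ffun 'I_n.+1 -> 'I_n.+1}.

Definition is_partition n (mu : mult_fun n) : bool :=
  (mu ord0 == 0 :> nat) && (\sum_(i < n.+1) i * mu i == n).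

Definition nparts_mod n (mu : mult_fun n) (d r : nat) : nat :=
  \sum_(i < n.+1 | i %% d == r) mu i.

Definition B1_pred (m1 m2 n : nat) (mu : mult_fun n) : bool :=
  [&& is_partition mu,
      [forall i : 'I_n.+1, (0 < mu i) ==> (i %% 6 \in [:: 0; 2; 3; 4])],
      nparts_mod mu 6 2 == m1 &
      nparts_mod mu 6 4 == m2].

Definition B1 (m1 m2 n : nat) : nat := #|[set mu : mult_fun n | B1_pred m1 m2 mu]|.

Definition B2_pred (m1 m2 n : nat) (mu : mult_fun n) : bool :=
  [&& is_partition mu,
      [forall i : 'I_n.+1, (0 < mu i) ==> (2 <= i)],
      [forall i : 'I_n.+1, forall j : 'I_n.+1,
          ((j : nat) == i.+1) ==> ((mu i == 0 :> nat) || (mu j == 0 :> nat))],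
      nparts_mod mu 3 1 == m2 &
      nparts_mod mu 3 2 == m1].

Definition B2 (m1 m2 n : nat) : nat := #|[set mu : mult_fun n | B2_pred m1 m2 mu]|.

From mathcomp Require Import all_boot zify.
Set Implicit Arguments. Unset Strict Implicit. Unset Printing Implicit Defensive.

(* Partitions are handled through multiplicity functions f : nat -> nat; the
   number [parts_ge f p] of parts >= p determines the conjugate partition,
   whose multiplicity at i > 0 is #{p >= 1 | parts_ge f p = i}.  We first
   develop conjugation: it is an involution, it preserves the size, and the
   parts of the conjugate in a set P not containing 0 are counted by the p
   with parts_ge f p in P.  Then:
   1. conjugation maps the partitions counted by B2 (parts >= 2, no two
      consecutive parts) onto the partitions in which no part occurs exactly
      once, the counts of parts = 1, 2 mod 3 becoming counts of tails;
   2. such a partition is uniquely nu + nu + D + D + D with D into distinct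
      parts; its tails are 2 t + 3 t' (t, t' the tails of nu, D), so modulo 3
      they are the tails of nu with residues 1 and 2 exchanged;
   3. conjugating nu turns these tail counts back into part counts of nu;
   4. (nu, D) corresponds to the partition with parts 2j (j part of nu, 3 not
      dividing j), j twice (j part of nu, 3 | j) and 3j (j part of D), which
      are exactly the partitions counted by B1. *)

Lemma sum_pick m x (F : nat -> nat) :
  \sum_(j < m.+1) (x == j :> nat) * F j = (x <= m) * F x.
Proof.
elim: m => [|m IH]; first by rewrite big_ord1; case: x.
rewrite big_ord_recr /= IH.
case: (eqVneq x m.+1) => [->|x_neq]; first by rewrite ltnn leqnn mul0n add0n mul1n.
rewrite mul0n addn0; congr (_ * _); lia.
Qed.

Lemma sum_range m v : \sum_(p < m.+1) ((0 < p) && (p <= v)) = minn v m.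
Proof.
elim: m => [|m IH]; first by rewrite big_ord1 /=; lia.
by rewrite big_ord_recr /= IH; case: (leqP m.+1 v); lia.
Qed.

Lemma sum_bool_gt0 m (F : 'I_m -> bool) : (0 < \sum_(i < m) F i) = [exists i, F i].
Proof.
apply/idP/existsP => [|[i Fi]]; last by rewrite (bigD1 i) //= Fi.
move=> sum_gt0; apply/existsP; apply: contraTT sum_gt0 => /existsPn notF.
rewrite -leqNgt leqn0.
by apply/eqP/big1 => i _; rewrite (negbTE (notF i)).
Qed.

Lemma sum_dvd_reindex n k (F : nat -> nat) : 0 < k ->
  \sum_(x < n.+1) (k %| x) * F x = \sum_(j < n.+1) (k * j <= n) * F (k * j).
Proof.
move=> k_gt0.
have delta (x : 'I_n.+1) :
    (k %| x) * F x = \sum_(j < n.+1) (k * j == x :> nat) * F (k * j).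
  have x_le : x %/ k <= n by have := ltn_ord x; have := leq_div x k; lia.
  have -> : (k %| x) * F x = (x %/ k <= n) * ((k %| x) * F x).
    by rewrite x_le mul1n.
  rewrite -(sum_pick n (x %/ k) (fun _ => (k %| x) * F x)).
  apply: eq_bigr => j _; case: (eqVneq (k * j) x) => [<-|neq].
    by rewrite mulKn // eqxx dvdn_mulr // !mul1n.
  case: (eqVneq (x %/ k) j) => [eq_j|]; last by rewrite /= !mul0n.
  suff -> : (k %| x) = false by rewrite mul0n muln0.
  apply/negbTE; apply: contra neq => /dvdnP [q x_eq].
  by rewrite -eq_j x_eq mulnK // mulnC.
under eq_bigr => x _ do rewrite delta.
rewrite exchange_big /=; apply: eq_bigr => j _.
exact: (sum_pick n (k * j) (fun _ => F (k * j))).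
Qed.

Lemma card_bij (T U : finType) (A : {set T}) (B : {set U}) (f : T -> U) (g : U -> T) :
  {in A, forall x, f x \in B} -> {in B, forall y, g y \in A} ->
  {in A, cancel f g} -> {in B, cancel g f} -> #|A| = #|B|.
Proof.
move=> fA gB fK gK; apply/eqP; rewrite eqn_leq; apply/andP; split.
- rewrite -(card_in_imset (can_in_inj fK)); apply: subset_leq_card.
  by apply/subsetP => _ /imsetP [x Ax ->]; exact: fA.
- rewrite -(card_in_imset (can_in_inj gK)); apply: subset_leq_card.
  by apply/subsetP => _ /imsetP [y By ->]; exact: gB.
Qed.

Lemma card_involution (T : finType) (P : pred T) (A B : {set T}) (f : T -> T) :
  {subset A <= P} -> {subset B <= P} -> {in P, forall x, P (f x)} ->
  {in P, involutive f} -> {in P, forall x, (f x \in B) = (x \in A)} -> #|A| = #|B|.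
Proof.
move=> AP BP fP fK fAB; apply: (card_bij (f := f) (g := f)).
- by move=> x Ax; rewrite fAB ?AP.
- move=> y By; have Py := BP y By.
  by have := fAB _ (fP y Py); rewrite (fK y Py) By => <-.
- by move=> x /AP; exact: fK.
- by move=> y /BP; exact: fK.
Qed.

Lemma unit_descent (g : nat -> nat) v a b :
  (forall p q, p <= q -> g q <= g p) -> a <= b -> g a = v.+1 -> g b = v ->
  exists k, [/\ a <= k, k < b, g k = v.+1 & g k.+1 = v].
Proof.
move=> g_mono; elim: b a => [|b IH] a le_ab ga gb.
  by move: le_ab ga; rewrite leqn0 => /eqP ->; lia.
case: (eqVneq a b.+1) => [a_eq|a_neq]; first by subst a; lia.
case: (eqVneq (g b) v) => [gb_v|gb_v].
  by have [k [*]] := IH a ltac:(lia) ga gb_v; exists k; split => //; lia.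
exists b; have := g_mono _ _ (leqnSn b); have := g_mono a b ltac:(lia).
by move: gb_v => /eqP; split; lia.
Qed.

Section Conjugation.
Variable n : nat.

Definition weight (f : nat -> nat) : nat := \sum_(i < n.+1) i * f i.
Definition parts_ge (f : nat -> nat) (p : nat) : nat := \sum_(q < n.+1) (p <= q) * f q.
Definition conjugate (f : nat -> nat) (i : nat) : nat :=
  (0 < i) * \sum_(p < n.+1) ((0 < p) && (parts_ge f p == i)).

Lemma parts_ge_mono f p q : p <= q -> parts_ge f q <= parts_ge f p.
Proof.
move=> le_pq; apply: leq_sum => i _; apply: leq_mul => //.
by case: (leqP q i) => //= le_qi; rewrite (leq_trans le_pq le_qi).
Qed.

Lemma parts_ge_out f p : n < p -> parts_ge f p = 0.
Proof.
by move=> lt_np; apply: big1 => i _; rewrite (_ : p <= i = false) //; have := ltn_ord i; lia.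
Qed.

Lemma parts_geS f p : p <= n -> parts_ge f p = f p + parts_ge f p.+1.
Proof.
move=> le_pn; have pick := sum_pick n p f; rewrite le_pn mul1n in pick.
rewrite /parts_ge -[f p]pick -big_split /=.
by apply: eq_bigr => i _; case: (ltngtP p i); lia.
Qed.

Lemma weight_parts_ge f : weight f = \sum_(p < n.+1) (0 < p) * parts_ge f p.
Proof.
rewrite /weight /parts_ge; symmetry.
under eq_bigr => p _ do rewrite big_distrr /=.
rewrite exchange_big /=; apply: eq_bigr => q _.
under eq_bigr => p _ do rewrite mulnA mulnb.
rewrite -big_distrl /= sum_range; congr (_ * _).
by have := ltn_ord q; lia.
Qed.

Lemma conjugate0 f : conjugate f 0 = 0.
Proof. by rewrite /conjugate mul0n. Qed.

Lemma conjugate_le f i : conjugate f i <= n.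
Proof.
rewrite /conjugate; case: (0 < i); rewrite ?mul0n ?mul1n //.
apply: leq_trans (_ : \sum_(p < n.+1) ((0 < p) && (p <= n)) <= n).
  apply: leq_sum => p _; case: (0 < p) => //=.
  by have := ltn_ord p; rewrite ltnS => ->; exact: leq_b1.
by rewrite sum_range minnn.
Qed.

Lemma conjugate_gt0 f i :
  (0 < conjugate f i) = (0 < i) && [exists p : 'I_n.+1, (0 < p) && (parts_ge f p == i)].
Proof. by rewrite /conjugate; case: (0 < i); rewrite ?mul0n ?mul1n // sum_bool_gt0. Qed.

Section CountAbove.
(* The Galois correspondence behind conjugation: for a nonincreasing g
   supported on 1..n, at least k values p in 1..n satisfy i <= g p
   exactly when i <= g k. *)
Variable g : nat -> nat.
Hypothesis g_mono : forall p q, p <= q -> g q <= g p.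
Hypothesis g_out : forall p, n < p -> g p = 0.

Lemma count_above k i : 0 < k -> 0 < i ->
  (k <= \sum_(p < n.+1) ((0 < p) && (i <= g p))) = (i <= g k).
Proof.
move=> k_gt0 i_gt0; case: (leqP i (g k)) => [le_ig|lt_gi].
- have le_kn : k <= n by case: (leqP k n) => // /g_out; lia.
  have : \sum_(p < n.+1) ((0 < p) && (p <= k))
      <= \sum_(p < n.+1) ((0 < p) && (i <= g p)).
    apply: leq_sum => p _; case: (0 < p) => //=; case: (leqP p k) => //= le_pk.
    by rewrite (leq_trans le_ig (g_mono le_pk)).
  by rewrite sum_range; lia.
- have : \sum_(p < n.+1) ((0 < p) && (i <= g p))
      <= \sum_(p < n.+1) ((0 < p) && (p <= k.-1)).
    apply: leq_sum => p _; case: (0 < p) => //=; case: (leqP i (g p)) => //= le_igp.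
    by case: (leqP p k.-1) => // lt_p; have := g_mono (_ : k <= p); lia.
  by rewrite sum_range => ?; apply/negbTE; lia.
Qed.
End CountAbove.

Section FewParts.
Variable f : nat -> nat.
Hypothesis few_parts : parts_ge f 1 <= n.

Lemma parts_ge_le p : 0 < p -> parts_ge f p <= n.
Proof. by move=> p_gt0; exact: leq_trans (parts_ge_mono f p_gt0) few_parts. Qed.

Lemma parts_ge_conjugate i : 0 < i ->
  parts_ge (conjugate f) i = \sum_(p < n.+1) ((0 < p) && (i <= parts_ge f p)).
Proof.
move=> i_gt0; rewrite {1}/parts_ge /conjugate.
under eq_bigr => j _ do rewrite big_distrr big_distrr /=.
rewrite exchange_big /=; apply: eq_bigr => p _.
have reorder (a b c d : bool) : a * (b * (c && d)) = d * (c * a * b).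
  by case: a; case: b; case: c; case: d.
under eq_bigr => j _ do rewrite reorder.
rewrite (sum_pick n (parts_ge f p) (fun j => (0 < p) * (i <= j) * (0 < j))).
case: p => p lt_pn /=; case: (posnP p) => [->|p_gt0] /=; first by rewrite !muln0.
rewrite (parts_ge_le p_gt0) !mul1n; case: (leqP i (parts_ge f p)) => //= le_i.
by rewrite (_ : 0 < parts_ge f p) //; lia.
Qed.

Lemma count_above_parts_ge k : 0 < k ->
  \sum_(i < n.+1) ((0 < i) && (k <= \sum_(p < n.+1) ((0 < p) && (i <= parts_ge f p))))
  = parts_ge f k.
Proof.
move=> k_gt0.
have above (i : 'I_n.+1) :
    (0 < i) && (k <= \sum_(p < n.+1) ((0 < p) && (i <= parts_ge f p)))
    = (0 < i) && (i <= parts_ge f k).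
  case: (posnP i) => [->|i_gt0] //=.
  by rewrite (count_above (@parts_ge_mono f) (@parts_ge_out f)).
under eq_bigr => i _ do rewrite above.
rewrite sum_range; case: (leqP k n) => [le_kn|lt_nk]; first by have := parts_ge_le k_gt0; lia.
by rewrite parts_ge_out //; lia.
Qed.

Lemma conjugateK k : 0 < k -> k <= n -> conjugate (conjugate f) k = f k.
Proof.
move=> k_gt0 le_kn; rewrite /conjugate k_gt0 mul1n -/(conjugate f).
set H := fun i => \sum_(p < n.+1) ((0 < p) && (i <= parts_ge f p)).
have tailH (i : 'I_n.+1) :
    (0 < i) && (parts_ge (conjugate f) i == k) = (0 < i) && (H i == k).
  by case: (posnP i) => [->|i_gt0] //=; rewrite parts_ge_conjugate.
under eq_bigr => i _ do rewrite tailH.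
have split_ge : \sum_(i < n.+1) ((0 < i) && (H i == k))
    + \sum_(i < n.+1) ((0 < i) && (k.+1 <= H i)) = \sum_(i < n.+1) ((0 < i) && (k <= H i)).
  by rewrite -big_split /=; apply: eq_bigr => i _; case: (0 < i); case: ltngtP.
by move: split_ge; rewrite /H !count_above_parts_ge // (parts_geS f le_kn); move/addIn.
Qed.

Lemma weight_conjugate : weight (conjugate f) = weight f.
Proof.
rewrite weight_parts_ge [RHS]weight_parts_ge.
have tail_sum (i : 'I_n.+1) : (0 < i) * parts_ge (conjugate f) i
    = \sum_(p < n.+1) ((0 < i) && ((0 < p) && (i <= parts_ge f p))).
  case: (posnP i) => [->|i_gt0]; first by rewrite mul0n big1.
  by rewrite mul1n parts_ge_conjugate.
under eq_bigr => i _ do rewrite tail_sum.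
rewrite exchange_big /=; apply: eq_bigr => p _.
have factor (i : 'I_n.+1) : (0 < i) && ((0 < p) && (i <= parts_ge f p))
    = (0 < p) * ((0 < i) && (i <= parts_ge f p)) :> nat.
  by case: (0 < i); case: (0 < p); rewrite ?mul1n ?mul0n.
under eq_bigr => i _ do rewrite factor.
rewrite -big_distrr /= sum_range; clear factor; case: p => p lt_pn /=.
by case: (posnP p) => [->|p_gt0] //; rewrite !mul1n; have := parts_ge_le p_gt0; lia.
Qed.

Lemma sum_conjugate (P : pred nat) : P 0 = false ->
  \sum_(i < n.+1 | P i) conjugate f i = \sum_(p < n.+1) ((0 < p) && P (parts_ge f p)).
Proof.
move=> P0; rewrite big_mkcond /=.
have mkcond (i : 'I_n.+1) : (if P i then conjugate f i else 0) = P i * conjugate f i.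
  by case: (P i); rewrite ?mul1n ?mul0n.
under eq_bigr => i _ do rewrite mkcond.
under eq_bigr => i _ do rewrite /conjugate big_distrr big_distrr /=.
rewrite exchange_big /=; apply: eq_bigr => p _.
have reorder (a b c d : bool) : a * (b * (c && d)) = d * (a * b * c).
  by case: a; case: b; case: c; case: d.
under eq_bigr => j _ do rewrite reorder.
rewrite (sum_pick n (parts_ge f p) (fun j => P j * (0 < j) * (0 < p))).
case: p => p lt_pn /=; case: (posnP p) => [->|p_gt0] /=; first by rewrite !muln0.
rewrite (parts_ge_le p_gt0) mul1n muln1.
by case: (posnP (parts_ge f p)) => [->|]; rewrite ?P0 ?muln1.
Qed.

Lemma conjugate_gt0_le p : 0 < conjugate f p -> p <= n.
Proof.
rewrite conjugate_gt0 => /andP [_ /existsP [q /andP [q_gt0 /eqP <-]]].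
exact: parts_ge_le.
Qed.

(* A part of multiplicity exactly one in f is a unit descent of the tails,
   which shows up in the conjugate as a part 1 (descent to 0) or as two
   consecutive parts. *)
Lemma mult_one_iff :
  (exists2 k, 0 < k <= n & f k = 1) <->
  (0 < conjugate f 1 \/ exists p, [/\ 0 < p, 0 < conjugate f p & 0 < conjugate f p.+1]).
Proof.
have mono := @parts_ge_mono f; split.
- case=> k /andP [k_gt0 le_kn] fk1; have := parts_geS f le_kn; rewrite fk1 => tailk.
  have ord_k : k < n.+1 by lia.
  case: (posnP (parts_ge f k.+1)) => [tail0|tail_gt0].
    left; rewrite conjugate_gt0 /=; apply/existsP; exists (Ordinal ord_k).
    by rewrite /= k_gt0 /=; apply/eqP; lia.
  right; exists (parts_ge f k.+1).
  have ord_k1 : k.+1 < n.+1 by case: (leqP k.+1 n) => // /(parts_ge_out f); lia.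
  split => //; rewrite conjugate_gt0 ?tail_gt0 /=; apply/existsP.
    by exists (Ordinal ord_k1); rewrite /= eqxx.
  by exists (Ordinal ord_k); rewrite /= k_gt0 /=; apply/eqP; lia.
- case=> [|[p [p_gt0]]].
    rewrite conjugate_gt0 /= => /existsP [q /andP [q_gt0 /eqP tailq]].
    have le_qn : (q : nat) <= n.+1 by have := ltn_ord q; lia.
    have [k [le_qk lt_kn tailk tailk1]] :=
      unit_descent mono le_qn tailq (parts_ge_out f (leqnn _)).
    have le_kn : k <= n by lia.
    by exists k; [lia | have := parts_geS f le_kn; lia].
  rewrite !conjugate_gt0 p_gt0 /= => /existsP [q2 /andP [_ /eqP tail2]].
  move=> /existsP [q1 /andP [q1_gt0 /eqP tail1]].
  have le_q : (q1 : nat) <= q2 by case: (leqP (q1 : nat) q2) => // /ltnW /mono; lia.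
  have [k [le_k lt_k tailk tailk1]] := unit_descent mono le_q tail1 tail2.
  have le_kn : k <= n by have := ltn_ord q2; lia.
  by exists k; [lia | have := parts_geS f le_kn; lia].
Qed.
End FewParts.

Lemma few_parts_of_weight f : weight f <= n -> parts_ge f 1 <= n.
Proof.
apply: leq_trans; apply: leq_sum => i _; apply: leq_mul => //.
by case: (nat_of_ord i).
Qed.

Lemma mul_le_weight (f : nat -> nat) (i : 'I_n.+1) : i * f i <= weight f.
Proof. by rewrite /weight (bigD1 i) //= leq_addr. Qed.

Lemma le_weight (f : nat -> nat) (i : 'I_n.+1) : 0 < i -> f i <= weight f.
Proof. by move=> i_gt0; apply: leq_trans (mul_le_weight f i); rewrite leq_pmull. Qed.

Lemma weight_lin (f g : nat -> nat) a b :
  weight (fun i => a * f i + b * g i) = a * weight f + b * weight g.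
Proof. by rewrite /weight !big_distrr -big_split /=; apply: eq_bigr => i _; lia. Qed.

Lemma parts_ge_lin (f g : nat -> nat) a b p :
  parts_ge (fun i => a * f i + b * g i) p = a * parts_ge f p + b * parts_ge g p.
Proof. by rewrite /parts_ge !big_distrr -big_split /=; apply: eq_bigr => i _; lia. Qed.

Definition agree (f g : nat -> nat) := forall i : 'I_n.+1, f i = g i.

Lemma parts_ge_agree f g p : agree f g -> parts_ge f p = parts_ge g p.
Proof. by move=> fg; apply: eq_bigr => i _; rewrite fg. Qed.

Lemma weight_agree f g : agree f g -> weight f = weight g.
Proof. by move=> fg; apply: eq_bigr => i _; rewrite fg. Qed.

Lemma conjugate_agree f g i : agree f g -> conjugate f i = conjugate g i.
Proof.
move=> fg; rewrite /conjugate; congr (_ * _).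
by apply: eq_bigr => p _; rewrite (parts_ge_agree _ fg).
Qed.
End Conjugation.

Section MultFun.
Variable n : nat.

Definition mvals (mu : mult_fun n) (k : nat) : nat :=
  if k < n.+1 then nat_of_ord (mu (inord k)) else 0.
Definition of_mvals (f : nat -> nat) : mult_fun n := [ffun i : 'I_n.+1 => inord (f i)].

Lemma mvals_ord mu (i : 'I_n.+1) : mvals mu i = mu i.
Proof. by rewrite /mvals ltn_ord inord_val. Qed.

Lemma mvals_out mu k : n < k -> mvals mu k = 0.
Proof. by move=> lt_nk; rewrite /mvals (_ : k < n.+1 = false) //; lia. Qed.

Lemma mvals_le mu k : mvals mu k <= n.
Proof. by rewrite /mvals; case: ltnP => // _; rewrite -ltnS. Qed.

Lemma mvals_of (f : nat -> nat) k : k <= n -> f k <= n -> mvals (of_mvals f) k = f k.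
Proof.
move=> le_kn le_fk; rewrite /mvals (_ : k < n.+1) ?ltnS // ffunE /=.
by rewrite (@inordK n k) ?ltnS // inordK ?ltnS.
Qed.

Lemma mult_fun_eq mu nu : (forall i : 'I_n.+1, mvals mu i = mvals nu i) -> mu = nu.
Proof. by move=> eq_mn; apply/ffunP => i; apply: val_inj; rewrite /= -!mvals_ord eq_mn. Qed.

Lemma agree_of_mvals (f : nat -> nat) :
  (forall i : 'I_n.+1, f i <= n) -> agree n (mvals (of_mvals f)) f.
Proof. by move=> f_le i; rewrite mvals_of // -ltnS. Qed.

Lemma nparts_mod_mvals mu d r : nparts_mod mu d r = \sum_(i < n.+1 | i %% d == r) mvals mu i.
Proof. by apply: eq_bigr => i _; rewrite mvals_ord. Qed.

Lemma is_partition_mvals mu :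
  is_partition mu = (mvals mu 0 == 0) && (weight n (mvals mu) == n).
Proof.
rewrite /is_partition -(mvals_ord mu ord0); congr (_ && (_ == _)).
by apply: eq_bigr => i _; rewrite mvals_ord.
Qed.

Definition conj_mult (mu : mult_fun n) : mult_fun n := of_mvals (conjugate n (mvals mu)).

Lemma conj_mult_agree mu : agree n (mvals (conj_mult mu)) (conjugate n (mvals mu)).
Proof. by apply: agree_of_mvals => i; exact: conjugate_le. Qed.

Lemma conj_mult_val mu (i : 'I_n.+1) : conj_mult mu i = conjugate n (mvals mu) i :> nat.
Proof. by rewrite -mvals_ord conj_mult_agree. Qed.

Lemma conj_mult0 mu : mvals (conj_mult mu) 0 = 0.
Proof. by rewrite (conj_mult_agree mu ord0) conjugate0. Qed.

Lemma weight_conj_mult mu : weight n (mvals mu) <= n ->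
  weight n (mvals (conj_mult mu)) = weight n (mvals mu).
Proof.
move=> small; rewrite (weight_agree (conj_mult_agree mu)) weight_conjugate //.
exact: few_parts_of_weight.
Qed.

Lemma conj_multK mu : mvals mu 0 = 0 -> weight n (mvals mu) <= n ->
  conj_mult (conj_mult mu) = mu.
Proof.
move=> mu0 small; apply: mult_fun_eq => i.
rewrite (conj_mult_agree _ i) (conjugate_agree _ (conj_mult_agree mu)).
case: (posnP i) => [->|i_gt0]; first by rewrite conjugate0.
have few := few_parts_of_weight small.
by rewrite conjugateK // -ltnS.
Qed.

Lemma conj_mult_partition mu : is_partition mu -> is_partition (conj_mult mu).
Proof.
rewrite !is_partition_mvals conj_mult0 => /andP [_ /eqP size_mu].
by rewrite weight_conj_mult size_mu ?eqxx.
Qed.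

Lemma conj_mult_involutive mu : is_partition mu -> conj_mult (conj_mult mu) = mu.
Proof.
by rewrite is_partition_mvals => /andP [/eqP mu0 /eqP size_mu]; rewrite conj_multK // size_mu.
Qed.

Lemma nparts_conj_mult mu d r : 0 < r < d -> weight n (mvals mu) <= n ->
  nparts_mod (conj_mult mu) d r
  = \sum_(p < n.+1) ((0 < p) && (parts_ge n (mvals mu) p %% d == r)).
Proof.
move=> r_bounds small; rewrite nparts_mod_mvals.
have few := few_parts_of_weight small.
rewrite -(@sum_conjugate n _ few (fun i => i %% d == r)) /=; last by rewrite mod0n; lia.
by apply: eq_bigr => i _; exact: conj_mult_agree.
Qed.
End MultFun.

Section NoSingleParts.
Variable n : nat.

(* Number of parts p >= 1 of the conjugate of mu congruent to r mod 3,
   expressed through the tails of mu. *)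
Definition tail_count (mu : mult_fun n) (r : nat) : nat :=
  \sum_(p < n.+1) ((0 < p) && (parts_ge n (mvals mu) p %% 3 == r)).

Lemma no_single_iff (mu : mult_fun n) : mvals mu 0 = 0 -> weight n (mvals mu) <= n ->
  [forall i, (0 < conj_mult mu i) ==> (2 <= i)] &&
  [forall i : 'I_n.+1, forall j : 'I_n.+1,
     ((j : nat) == i.+1) ==> ((conj_mult mu i == 0 :> nat) || (conj_mult mu j == 0 :> nat))]
  = [forall i : 'I_n.+1, mu i != 1 :> nat].
Proof.
move=> mu0 small.
have few := few_parts_of_weight small.
have one_iff := mult_one_iff few.
have ord_of k : k <= n -> k < n.+1 by rewrite ltnS.
apply/idP/idP.
- case/andP => /forallP no_one /forallP no_consec; apply/forallP => i.
  apply/negP => /eqP mu_i; have i_gt0 : 0 < i.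
    by case: (posnP i) => // i0; have := mvals_ord mu i; rewrite i0 mu0 mu_i.
  have i_range : 0 < i <= n by rewrite i_gt0 -ltnS ltn_ord.
  have [conj1|[p [p_gt0 conj_p conj_p1]]] := proj1 one_iff
    (ex_intro2 _ _ (nat_of_ord i) i_range (etrans (mvals_ord mu i) mu_i)).
    have ord1 : 1 < n.+1 by have := conjugate_gt0_le few conj1; lia.
    by have := no_one (Ordinal ord1); rewrite conj_mult_val /= conj1.
  have ordp1 := ord_of _ (conjugate_gt0_le few conj_p1).
  have ordp : p < n.+1 by lia.
  move/forallP: (no_consec (Ordinal ordp)) => /(_ (Ordinal ordp1)).
  by rewrite /= eqxx /= !conj_mult_val /=; lia.
- move=> /forallP no_single.
  have no_one_mult k : 0 < k <= n -> mvals mu k = 1 -> False.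
    by case/andP => _ /ord_of le_k fk; have := no_single (Ordinal le_k); rewrite -mvals_ord fk.
  apply/andP; split; apply/forallP => i.
    apply/implyP; rewrite conj_mult_val => conj_i; case: (leqP 2 i) => // lt_i2.
    have i1 : (i : nat) = 1.
      by case: (posnP i) => [i0|]; [move: conj_i; rewrite i0 conjugate0 | lia].
    rewrite i1 in conj_i; have [k k_range mu_k] := proj2 one_iff (or_introl conj_i).
    by case: (no_one_mult k k_range mu_k).
  apply/forallP => j; apply/implyP => /eqP j_eq; rewrite !conj_mult_val.
  case: (posnP (conjugate n (mvals mu) i)) => //= conj_i.
  case: (posnP (conjugate n (mvals mu) j)) => //= conj_j.
  have i_gt0 : 0 < i by case: (posnP i) => // i0; move: conj_i; rewrite i0 conjugate0.
  rewrite j_eq in conj_j.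
  have [k k_range mu_k] :=
    proj2 one_iff (or_intror (ex_intro _ (nat_of_ord i) (And3 i_gt0 conj_i conj_j))).
  by case: (no_one_mult k k_range mu_k).
Qed.

(* Conjugates of the partitions counted by B2. *)
Definition no_single_set (m1 m2 : nat) : {set mult_fun n} :=
  [set mu | [&& is_partition mu, [forall i, mu i != 1 :> nat],
                tail_count mu 1 == m2 & tail_count mu 2 == m1]].

Lemma B2_pred_conj_mult m1 m2 (nu : mult_fun n) : is_partition nu ->
  B2_pred m1 m2 (conj_mult nu) = (nu \in no_single_set m1 m2).
Proof.
move=> part_nu; have := part_nu; rewrite is_partition_mvals => /andP [/eqP nu0 /eqP size_nu].
have small : weight n (mvals nu) <= n by rewrite size_nu.
rewrite inE /B2_pred conj_mult_partition // part_nu !nparts_conj_mult //.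
by rewrite /= andbA no_single_iff.
Qed.

Lemma B2_no_single m1 m2 : B2 m1 m2 n = #|no_single_set m1 m2|.
Proof.
apply: (@card_involution _ (@is_partition n) _ _ (@conj_mult n)).
- by move=> mu; rewrite inE => /and5P [].
- by move=> mu; rewrite inE => /and4P [].
- exact: conj_mult_partition.
- exact: conj_mult_involutive.
- move=> mu part_mu; rewrite inE -B2_pred_conj_mult ?conj_mult_partition //.
  by rewrite conj_mult_involutive.
Qed.
End NoSingleParts.

(* Every multiplicity v <> 1 is uniquely 2 * twos v + 3 * b with b <= 1. *)
Definition twos (v : nat) : nat := (v - 3 * (v %% 2)) %/ 2.

Lemma twos_decomp v : v != 1 -> 2 * twos v + 3 * (v %% 2) = v.
Proof. by rewrite /twos; lia. Qed.

Lemma twos_unique a b : b <= 1 -> twos (2 * a + 3 * b) = a /\ (2 * a + 3 * b) %% 2 = b.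
Proof. by rewrite /twos; lia. Qed.

Section SplitMerge.
Variable n : nat.

Definition pair_shape (x : mult_fun n * mult_fun n) : bool :=
  [&& mvals x.1 0 == 0, mvals x.2 0 == 0, [forall i, nat_of_ord (x.2 i) <= 1]
    & 2 * weight n (mvals x.1) + 3 * weight n (mvals x.2) == n].

(* A partition with no single part is nu + nu + D + D + D. *)
Definition split_mult (mu : mult_fun n) : mult_fun n * mult_fun n :=
  (of_mvals n (fun i => twos (mvals mu i)), of_mvals n (fun i => mvals mu i %% 2)).
Definition merge_mult (x : mult_fun n * mult_fun n) : mult_fun n :=
  of_mvals n (fun i => 2 * mvals x.1 i + 3 * mvals x.2 i).

Lemma split_mult1 mu : agree n (mvals (split_mult mu).1) (fun i => twos (mvals mu i)).
Proof.
apply: agree_of_mvals => i; apply: leq_trans (mvals_le mu i).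
by rewrite /twos; apply: leq_trans (leq_div _ _) _; exact: leq_subr.
Qed.

Lemma split_mult2 mu : agree n (mvals (split_mult mu).2) (fun i => mvals mu i %% 2).
Proof. by apply: agree_of_mvals => i; exact: leq_trans (leq_mod _ _) (mvals_le _ _). Qed.

Lemma merge_mult_agree x : mvals x.1 0 = 0 -> mvals x.2 0 = 0 ->
  2 * weight n (mvals x.1) + 3 * weight n (mvals x.2) <= n ->
  agree n (mvals (merge_mult x)) (fun i => 2 * mvals x.1 i + 3 * mvals x.2 i).
Proof.
move=> x1_0 x2_0 small; apply: agree_of_mvals => i.
case: (posnP i) => [->|i_gt0]; first by rewrite x1_0 x2_0.
by have := le_weight (mvals x.1) i_gt0; have := le_weight (mvals x.2) i_gt0; lia.
Qed.

(* Tails of nu + nu + D + D + D are 2 t + 3 t' where t, t' are those of nu and D;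
   modulo 3 only 2 t matters, and multiplication by 2 swaps residues 1 and 2. *)
Lemma tail_count_merge (mu nu D : mult_fun n) :
  agree n (mvals mu) (fun i => 2 * mvals nu i + 3 * mvals D i) ->
  tail_count mu 1 = tail_count nu 2 /\ tail_count mu 2 = tail_count nu 1.
Proof.
move=> mu_eq; suff tail_mod r : r < 3 -> tail_count mu r = tail_count nu (2 * r %% 3).
  by split; exact: tail_mod.
move=> lt_r3; apply: eq_bigr => p _.
by rewrite (parts_ge_agree _ mu_eq) parts_ge_lin; congr (_ && _); apply/eqP/eqP; lia.
Qed.

Definition pair_tail_set (m1 m2 : nat) : {set mult_fun n * mult_fun n} :=
  [set x | [&& pair_shape x, tail_count x.1 1 == m1 & tail_count x.1 2 == m2]].

Section SplitNoSingle.
Variable mu : mult_fun n.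
Hypothesis mu0 : mvals mu 0 = 0.
Hypothesis size_mu : weight n (mvals mu) = n.
Hypothesis no_single : [forall i : 'I_n.+1, mu i != 1 :> nat].

Lemma split_mult_agree :
  agree n (mvals mu) (fun i => 2 * mvals (split_mult mu).1 i + 3 * mvals (split_mult mu).2 i).
Proof.
move=> i; rewrite split_mult1 split_mult2 twos_decomp //.
by rewrite mvals_ord; exact: (forallP no_single).
Qed.

Lemma split_mult_shape : pair_shape (split_mult mu).
Proof.
apply/and4P; split.
- by rewrite (split_mult1 mu ord0) /= mu0.
- by rewrite (split_mult2 mu ord0) /= mu0.
- by apply/forallP => i; rewrite -mvals_ord split_mult2 -ltnS ltn_pmod.
- by rewrite -weight_lin -(weight_agree split_mult_agree) size_mu.
Qed.

Lemma merge_split_mult : merge_mult (split_mult mu) = mu.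
Proof.
have /and4P [/eqP x1_0 /eqP x2_0 _ /eqP size_x] := split_mult_shape.
apply: mult_fun_eq => i.
by rewrite (merge_mult_agree x1_0 x2_0) ?size_x // split_mult_agree.
Qed.
End SplitNoSingle.

Lemma merge_shape_agree x : pair_shape x ->
  agree n (mvals (merge_mult x)) (fun i => 2 * mvals x.1 i + 3 * mvals x.2 i).
Proof.
by case/and4P => /eqP x1_0 /eqP x2_0 _ /eqP size_x; apply: merge_mult_agree; rewrite ?size_x.
Qed.

Lemma distinct_parts x : pair_shape x -> forall i : 'I_n.+1, mvals x.2 i <= 1.
Proof. by case/and4P => _ _ /forallP distinct _ i; rewrite mvals_ord. Qed.

Lemma merge_mult_no_single x : pair_shape x ->
  is_partition (merge_mult x) && [forall i, merge_mult x i != 1 :> nat].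
Proof.
move=> shape; have merge_eq := merge_shape_agree shape.
case/and4P: shape (distinct_parts shape) => /eqP x1_0 /eqP x2_0 _ /eqP size_x distinct.
rewrite is_partition_mvals (merge_eq ord0) /= x1_0 x2_0 /=.
rewrite (weight_agree merge_eq) weight_lin size_x eqxx /=.
by apply/forallP => i; rewrite -mvals_ord merge_eq; have := distinct i; lia.
Qed.

Lemma split_merge_mult x : pair_shape x -> split_mult (merge_mult x) = x.
Proof.
case: x => nu D shape; have merge_eq := merge_shape_agree shape.
congr (_, _); apply: (@mult_fun_eq n) => i; have := distinct_parts shape i.
- by rewrite split_mult1 merge_eq => /(twos_unique (mvals nu i)) [].
- by rewrite split_mult2 merge_eq => /(twos_unique (mvals nu i)) [].
Qed.

Lemma no_single_pair_tail m1 m2 : #|no_single_set n m1 m2| = #|pair_tail_set m1 m2|.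
Proof.
apply: (card_bij (f := split_mult) (g := merge_mult)).
- move=> mu; rewrite inE is_partition_mvals.
  case/and4P => /andP [/eqP mu0 /eqP size_mu] no_single tc1 tc2.
  rewrite inE; have [<- <-] := tail_count_merge (split_mult_agree no_single).
  by rewrite split_mult_shape ?tc1 ?tc2.
- move=> x; rewrite inE => /and3P [shape tc1 tc2].
  rewrite inE; have [-> ->] := tail_count_merge (merge_shape_agree shape).
  by rewrite andbA merge_mult_no_single ?tc1 ?tc2.
- move=> mu; rewrite inE is_partition_mvals.
  by case/and4P => /andP [/eqP mu0 /eqP size_mu] no_single _ _; exact: merge_split_mult.
- by move=> x; rewrite inE => /and3P [shape _ _]; exact: split_merge_mult.
Qed.
End SplitMerge.

Section ConjugateFirst.
Variable n : nat.

Definition pair_set (m1 m2 : nat) : {set mult_fun n * mult_fun n} :=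
  [set x | [&& pair_shape x, nparts_mod x.1 3 1 == m1 & nparts_mod x.1 3 2 == m2]].

Definition conj_first (x : mult_fun n * mult_fun n) := (conj_mult x.1, x.2).

Lemma pair_shape_small (x : mult_fun n * mult_fun n) : pair_shape x ->
  mvals x.1 0 = 0 /\ weight n (mvals x.1) <= n.
Proof. by case/and4P => /eqP x1_0 _ _ /eqP size_x; split; lia. Qed.

Lemma pair_shape_conj_first x : pair_shape x -> pair_shape (conj_first x).
Proof.
move=> shape; have [_ small] := pair_shape_small shape.
case/and4P: shape => _ x2_0 distinct /eqP size_x.
by apply/and4P; rewrite /= conj_mult0 weight_conj_mult // size_x.
Qed.

Lemma pair_tail_conj_first m1 m2 : #|pair_tail_set n m1 m2| = #|pair_set m1 m2|.
Proof.
apply: (@card_involution _ (@pair_shape n) _ _ conj_first).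
- by move=> x; rewrite inE => /and3P [].
- by move=> x; rewrite inE => /and3P [].
- exact: pair_shape_conj_first.
- move=> x /pair_shape_small [x1_0 small].
  by rewrite /conj_first /= conj_multK // -surjective_pairing.
- move=> x shape; have {}shape : pair_shape x by [].
  have [_ small] := pair_shape_small shape.
  by rewrite !inE pair_shape_conj_first // shape /= !nparts_conj_mult.
Qed.
End ConjugateFirst.

Section Assemble.
Variable n : nat.

(* From nu and D, the partition with parts 2j for each part j of nu with
   3 not dividing j, two parts j for each part j of nu with 3 | j, and a part
   3j for each part j of D; its parts are exactly those = 0, 2, 3, 4 mod 6. *)
Definition assemble (s d : nat -> nat) (t : nat) : nat :=
  if t %% 3 == 0 then 2 * s t + d (t %/ 3) else if t %% 2 == 0 then s (t %/ 2) else 0.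

Section AssembleBounded.
Variables s d : nat -> nat.
Hypothesis s_out : forall j, n < 2 * j -> s j = 0.
Hypothesis d_out : forall j, n < 3 * j -> d j = 0.

Lemma assemble_out t : n < t -> assemble s d t = 0.
Proof.
move=> lt_nt; rewrite /assemble; case: ifP => t3.
- by rewrite s_out ?d_out; lia.
- by case: ifP => // t2; apply: s_out; lia.
Qed.

Lemma weight_assemble : weight n (assemble s d) = 2 * weight n s + 3 * weight n d.
Proof.
have split_t (t : 'I_n.+1) : t * assemble s d t =
    (3 %| t) * (2 * (t * s t)) + (3 %| t) * (t * d (t %/ 3))
    + (2 %| t) * (~~ (3 %| t) * (t * s (t %/ 2))).
  rewrite /assemble /dvdn; case: (eqVneq (t %% 3) 0) => t3 /=; first lia.
  by case: (eqVneq (t %% 2) 0) => t2 /=; lia.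
rewrite /weight; under eq_bigr => t _ do rewrite split_t.
rewrite !big_split /= (sum_dvd_reindex _ (fun t => t * d (t %/ 3))) //.
rewrite (sum_dvd_reindex _ (fun t => ~~ (3 %| t) * (t * s (t %/ 2)))) //.
have triples : \sum_(j < n.+1) (3 * j <= n) * (3 * j * d (3 * j %/ 3))
    = 3 * \sum_(j < n.+1) j * d j.
  rewrite big_distrr /=; apply: eq_bigr => j _; rewrite mulKn //.
  by case: (leqP (3 * j) n) => le3j; [lia | rewrite d_out //; lia].
have doubles : \sum_(j < n.+1) (2 * j <= n) * (~~ (3 %| 2 * j) * (2 * j * s (2 * j %/ 2)))
    = \sum_(j < n.+1) ~~ (3 %| j) * (2 * (j * s j)).
  apply: eq_bigr => j _; rewrite mulKn // Euclid_dvdM //=.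
  by case: (leqP (2 * j) n) => le2j; [lia | rewrite s_out //; lia].
rewrite triples doubles -addnA [X in _ + X]addnC addnA -big_split /= !big_distrr /=.
by congr (_ + _); apply: eq_bigr => j _; case: (3 %| j); rewrite /= ?mul1n ?mul0n ?addn0.
Qed.

Lemma sum_assemble_mod6 r : 0 < r < 3 ->
  \sum_(t < n.+1 | t %% 6 == 2 * r) assemble s d t = \sum_(j < n.+1 | j %% 3 == r) s j.
Proof.
move=> r_bounds; rewrite !big_mkcond /=.
have select (t : 'I_n.+1) : (if t %% 6 == 2 * r then assemble s d t else 0)
    = (2 %| t) * ((t %/ 2 %% 3 == r) * s (t %/ 2)).
  rewrite /assemble /dvdn; case: ifP => t6.
    have [-> -> ->] : [/\ (t %% 3 == 0) = false, t %% 2 == 0 & t %/ 2 %% 3 == r].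
      by split; lia.
    by rewrite !mul1n.
  case: (eqVneq (t %% 2) 0) => t2 //=.
  have -> : (t %/ 2 %% 3 == r) = false by lia.
  by rewrite mul0n muln0.
under eq_bigr => t _ do rewrite select.
rewrite (sum_dvd_reindex _ (fun t => (t %/ 2 %% 3 == r) * s (t %/ 2))) //.
rewrite [RHS]big_mkcond; apply: eq_bigr => j _; rewrite mulKn //.
case: (leqP (2 * j) n) => le2j; first by case: (j %% 3 == r); rewrite /= ?mul1n.
by rewrite s_out //; case: (j %% 3 == r); rewrite /= ?muln0.
Qed.
End AssembleBounded.
End Assemble.

Section AssemblePairs.
Variable n : nat.

Definition disassemble (mu : mult_fun n) : mult_fun n * mult_fun n :=
  (of_mvals n (fun j => if j %% 3 == 0 then mvals mu j %/ 2 else mvals mu (2 * j)),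
   of_mvals n (fun j => mvals mu (3 * j) %% 2)).
Definition assemble_mult (x : mult_fun n * mult_fun n) : mult_fun n :=
  of_mvals n (assemble (mvals x.1) (mvals x.2)).

Lemma disassemble1 mu k : mvals (disassemble mu).1 k
  = if k %% 3 == 0 then mvals mu k %/ 2 else mvals mu (2 * k).
Proof.
case: (leqP k n) => [le_kn|lt_nk].
  rewrite mvals_of //; case: ifP => _; last exact: mvals_le.
  exact: leq_trans (leq_div _ _) (mvals_le _ _).
rewrite mvals_out //; case: ifP => _; first by rewrite mvals_out.
by rewrite mvals_out //; lia.
Qed.

Lemma disassemble2 mu k : mvals (disassemble mu).2 k = mvals mu (3 * k) %% 2.
Proof.
case: (leqP k n) => [le_kn|lt_nk].
  by rewrite mvals_of // (leq_trans (leq_mod _ _) (mvals_le _ _)).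
by rewrite mvals_out // mvals_out //; lia.
Qed.

Lemma part_bound (mu : mult_fun n) c j : mvals mu 0 = 0 -> c * weight n (mvals mu) <= n ->
  0 < mvals mu j -> c * j <= n.
Proof.
move=> mu0 small mu_j; case: (leqP j n) => [le_jn|lt_nj]; last by rewrite mvals_out in mu_j.
have ord_j : j < n.+1 by rewrite ltnS.
have := mul_le_weight (mvals mu) (Ordinal ord_j) => /=.
by case: (posnP j) => [j0|j_gt0]; [move: mu_j; rewrite j0 mu0 | nia].
Qed.

Lemma pair_support (x : mult_fun n * mult_fun n) : pair_shape x ->
  (forall j, n < 2 * j -> mvals x.1 j = 0) /\ (forall j, n < 3 * j -> mvals x.2 j = 0).
Proof.
case/and4P => /eqP x1_0 /eqP x2_0 _ /eqP size_x.
split=> j lt_nj; apply/eqP; rewrite -leqn0 leqNgt; apply/negP => /part_bound bound.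
  by have := bound 2 x1_0 ltac:(lia); lia.
by have := bound 3 x2_0 ltac:(lia); lia.
Qed.

Lemma assemble_mult_vals (x : mult_fun n * mult_fun n) : pair_shape x ->
  forall t, mvals (assemble_mult x) t = assemble (mvals x.1) (mvals x.2) t.
Proof.
move=> shape t; have [s_out d_out] := pair_support shape.
case: (leqP t n) => [le_tn|lt_nt]; last by rewrite mvals_out // (assemble_out s_out d_out).
rewrite mvals_of //; case/and4P: shape => /eqP x1_0 /eqP x2_0 _ /eqP size_x.
case: (posnP t) => [->|t_gt0]; first by rewrite /assemble /= x1_0 x2_0.
have ord_t : t < n.+1 by rewrite ltnS.
have := le_weight (assemble (mvals x.1) (mvals x.2)) (i := Ordinal ord_t) t_gt0.
by rewrite weight_assemble //= size_x.
Qed.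

Lemma nparts_assemble (mu nu D : mult_fun n) :
  (forall j, n < 2 * j -> mvals nu j = 0) ->
  (forall t, mvals mu t = assemble (mvals nu) (mvals D) t) ->
  nparts_mod mu 6 2 = nparts_mod nu 3 1 /\ nparts_mod mu 6 4 = nparts_mod nu 3 2.
Proof.
move=> nu_out mu_eq; rewrite !nparts_mod_mvals.
by split; under eq_bigr => t _ do rewrite mu_eq;
  [exact: (sum_assemble_mod6 _ nu_out (r := 1)) | exact: (sum_assemble_mod6 _ nu_out (r := 2))].
Qed.
End AssemblePairs.

Section B1Pairs.
Variable n : nat.

Definition parts_0234 (mu : mult_fun n) : bool :=
  [forall i : 'I_n.+1, (0 < mu i) ==> (i %% 6 \in [:: 0; 2; 3; 4])].

Section Disassemble.
Variable mu : mult_fun n.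
Hypothesis part_mu : is_partition mu.
Hypothesis residues : parts_0234 mu.

Let nu := mvals (disassemble mu).1.
Let D := mvals (disassemble mu).2.

Lemma disassemble_out1 j : n < 2 * j -> nu j = 0.
Proof.
move=> lt_nj; rewrite /nu disassemble1; case: ifP => _; last by rewrite mvals_out.
case: (leqP j n) => [le_jn|lt_nj']; last by rewrite mvals_out.
move: part_mu; rewrite is_partition_mvals => /andP [_ /eqP size_mu].
have ord_j : j < n.+1 by rewrite ltnS.
by have := mul_le_weight (mvals mu) (Ordinal ord_j); rewrite size_mu /=; nia.
Qed.

Lemma disassemble_out2 j : n < 3 * j -> D j = 0.
Proof. by move=> lt_nj; rewrite /D disassemble2 mvals_out. Qed.

Lemma assemble_disassemble_vals t : assemble nu D t = mvals mu t.
Proof.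
rewrite /assemble /nu /D !disassemble1 disassemble2; case: ifP => t3.
  have -> : 3 * (t %/ 3) = t by lia.
  by rewrite t3; lia.
case: ifP => t2.
  have -> : (t %/ 2 %% 3 == 0) = false by lia.
  by have -> : 2 * (t %/ 2) = t by lia.
case: (leqP t n) => [le_tn|lt_nt]; last by rewrite mvals_out.
have ord_t : t < n.+1 by rewrite ltnS.
move/forallP: residues => /(_ (Ordinal ord_t)); rewrite -mvals_ord /= !inE.
by case: (posnP (mvals mu t)) => //= _; lia.
Qed.

Lemma disassemble_shape : pair_shape (disassemble mu).
Proof.
move: part_mu; rewrite is_partition_mvals => /andP [/eqP mu0 /eqP size_mu].
apply/and4P; split.
- by rewrite disassemble1 /= mu0.
- by rewrite disassemble2 /= mu0.
- by apply/forallP => i; rewrite -mvals_ord disassemble2 -ltnS ltn_pmod.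
- rewrite -(weight_assemble disassemble_out1 disassemble_out2) -[X in _ == X]size_mu.
  by apply/eqP/eq_bigr => i _; rewrite assemble_disassemble_vals.
Qed.

Lemma assemble_disassemble : assemble_mult (disassemble mu) = mu.
Proof.
apply: mult_fun_eq => i.
by rewrite (assemble_mult_vals disassemble_shape) assemble_disassemble_vals.
Qed.
End Disassemble.

Lemma assemble_B1_shape (x : mult_fun n * mult_fun n) : pair_shape x ->
  is_partition (assemble_mult x) && parts_0234 (assemble_mult x).
Proof.
move=> shape; have [s_out d_out] := pair_support shape.
have vals := assemble_mult_vals shape.
case/and4P: shape => /eqP x1_0 /eqP x2_0 _ /eqP size_x.
rewrite is_partition_mvals vals /assemble /= x1_0 x2_0 /=.
rewrite (weight_agree (g := assemble (mvals x.1) (mvals x.2))) => [|i]; last exact: vals.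
rewrite weight_assemble // size_x eqxx /=.
apply/forallP => i; apply/implyP; rewrite -mvals_ord vals /assemble !inE.
by case: ifP => t3; [lia | case: ifP => t2 //; lia].
Qed.

Lemma disassemble_assemble (x : mult_fun n * mult_fun n) : pair_shape x ->
  disassemble (assemble_mult x) = x.
Proof.
case: x => nu D shape; have vals := assemble_mult_vals shape.
have distinct := distinct_parts shape.
have D_le1 j : mvals D j <= 1.
  case: (leqP j n) => [le_jn|lt_nj]; last by rewrite mvals_out.
  have ord_j : j < n.+1 by rewrite ltnS.
  exact: distinct (Ordinal ord_j).
congr (_, _); apply: (@mult_fun_eq n) => k.
- rewrite disassemble1 !vals /assemble /=; case: ifP => k3.
    by rewrite k3; have := D_le1 (k %/ 3); lia.
  have -> : (2 * k) %% 3 == 0 = false by lia.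
  have -> : (2 * k) %% 2 == 0 by lia.
  by rewrite mulKn.
- rewrite disassemble2 vals /assemble /=.
  have -> : (3 * k) %% 3 == 0 by lia.
  by rewrite mulKn //; have := D_le1 k; lia.
Qed.

Lemma B1_pair_set m1 m2 : B1 m1 m2 n = #|pair_set n m1 m2|.
Proof.
apply: (card_bij (f := @disassemble n) (g := @assemble_mult n)).
- move=> mu; rewrite !inE => /and4P [part_mu residues c2 c4].
  have [<- <-] := nparts_assemble (disassemble_out1 part_mu residues)
    (fun t => esym (assemble_disassemble_vals part_mu residues t)).
  by rewrite disassemble_shape ?c2 ?c4.
- move=> x; rewrite !inE => /and3P [shape c1 c2].
  have [s_out _] := pair_support shape.
  rewrite /B1_pred; have [-> ->] := nparts_assemble s_out (assemble_mult_vals shape).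
  by rewrite andbA assemble_B1_shape ?c1 ?c2.
- by move=> mu; rewrite inE => /and4P [part_mu residues _ _]; exact: assemble_disassemble.
- by move=> x; rewrite inE => /and3P [shape _ _]; exact: disassemble_assemble.
Qed.
End B1Pairs.

Theorem theorem3p1 (n m1 m2 : nat) : B1 m1 m2 n = B2 m1 m2 n.
Proof.
by rewrite B1_pair_set -pair_tail_conj_first -no_single_pair_tail -B2_no_single.
Qed.
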